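(* Let $U\in\mathbb{U}_N$ and $T\subseteq[n]$, and suppose $\sum_{\vec{x}\in\mathbb{Z}_4^T}|\mu_{\vec{x}}(U)|^2 \ge 1-\delta$. Then there exists $\tilde{V}\in\mathbb{U}_{2^{|T|}}$ such that $D(U,\tilde{V}_T\otimes I_{T^c})\le 2\sqrt{\delta}$.
   Context: $n\ge1$, $N=2^n$, $[n]=\{1,\dots,n\}$ indexes the qubits of $(\mathbb{C}^2)^{\otimes n}$; $\mathbb{U}_d$ is the group of $d\times d$ unitaries. Pauli matrices: $\sigma_0=I$, $\sigma_1=X$, $\sigma_2=Y$, $\sigma_3=Z$; for $\vec{x}=(x_1,\dots,x_n)\in\mathbb{Z}_4^n=\{0,1,2,3\}^n$, $\sigma_{\vec{x}}=\sigma_{x_1}\otimes\cdots\otimes\sigma_{x_n}$. Every $A\in\mathbb{M}_{N,N}$ is written uniquely as $A=\sum_{\vec{x}}\mu_{\vec{x}}(A)\sigma_{\vec{x}}$ with $\mu_{\vec{x}}(A)=\frac1N\mathrm{tr}(\sigma_{\vec{x}}A)$. $\mathrm{supp}(\vec{x})=\{i: x_i\ne0\}$ and $\mathbb{Z}_4^T=\{\vec{x}\in\mathbb{Z}_4^n:\mathrm{supp}(\vec{x})\subseteq T\}$. $V_T\otimes I_{T^c}$ denotes the operator acting as $V$ on the qubits in $T$ and as identity on those in $T^c=[n]\setminus T$. $\|A\|=\sqrt{\mathrm{tr}(A^\dagger A)}$ and $D(A,B)=\min_{\theta\in[0,2\pi)}\frac{1}{\sqrt{2N}}\|e^{i\theta}A-B\|$.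 *)

From HB Require Import structures.
From mathcomp Require Import all_boot all_order all_algebra.
Set Implicit Arguments. Unset Strict Implicit. Unset Printing Implicit Defensive.
Import Order.TTheory GRing.Theory Num.Theory.
Local Open Scope ring_scope.

Section Qubits.
Variable C : numClosedFieldType.

(* Bit of basis index i : 'I_(2^n) for qubit k : 'I_n (qubit 0 = first
   tensor factor = most significant bit). *)
Definition qbit (n : nat) (i : nat) (k : 'I_n) : bool :=
  odd (i %/ 2 ^ (n.-1 - k)).

(* Single-qubit Pauli matrices sigma_0..sigma_3 = I, X, Y, Z, entry (b,c),
   basis vector |0> <-> false, |1> <-> true. *)
Definition pauli1 (a : 'I_4) (b c : bool) : C :=
  match val a with
  | 0 => (b == c)%:R
  | 1 => (b != c)%:R
  | 2 => if b == c then 0 else if c then - 'i else 'i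
  | _ => if b == c then (if b then -1 else 1) else 0
  end.

Definition pauli (n : nat) (x : {ffun 'I_n -> 'I_4}) : 'M[C]_(2 ^ n) :=
  \matrix_(i, j) \prod_(k < n) pauli1 (x k) (qbit i k) (qbit j k).

Definition mu (n : nat) (x : {ffun 'I_n -> 'I_4}) (A : 'M[C]_(2 ^ n)) : C :=
  ((2 ^ n)%:R)^-1 * \tr (pauli x *m A).

Definition in_Z4T (n : nat) (T : {set 'I_n}) (x : {ffun 'I_n -> 'I_4}) : bool :=
  [forall k, (x k != 0%R :> 'I_4) ==> (k \in T)].

(* cast a nat into 'I_(2^p) (reduction mod 2^p, harmless below) *)
Definition ord2p (p k : nat) : 'I_(2 ^ p) :=
  Ordinal (ltn_pmod k (expn_gt0 2 p)).

(* index of the basis state of the qubits in T (in increasing order, first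
   one most significant) extracted from the basis index i *)
Definition restr (n : nat) (T : {set 'I_n}) (i : nat) : 'I_(2 ^ #|T|) :=
  ord2p #|T| (foldl (fun acc k => acc.*2 + qbit i k)%N 0%N (enum T)).

Definition tensorT (n : nat) (T : {set 'I_n}) (V : 'M[C]_(2 ^ #|T|)) :
  'M[C]_(2 ^ n) :=
  \matrix_(i, j) (V (restr T i) (restr T j) *
                  (restr (~: T) i == restr (~: T) j)%:R).

Definition adj m (A : 'M[C]_m) : 'M[C]_m := (map_mx Num.conj A)^T.

Definition unitary m (A : 'M[C]_m) : bool := adj A *m A == 1%:M.

Definition fnorm m (A : 'M[C]_m) : C := sqrtC (\tr (adj A *m A)).

(* The function whose minimum over theta defines D(A,B):
   (1/sqrt(2N)) ||e^{i theta} A - B||, with c = e^{i theta}, |c| = 1. *)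
Definition Dfun (n : nat) (A B : 'M[C]_(2 ^ n)) (c : C) : C :=
  (sqrtC (2 * 2 ^ n)%:R)^-1 * fnorm (c *: A - B).

(* D(A,B) <= r, i.e. min_{theta} Dfun(e^{i theta}) <= r; the minimum is
   attained, so this is: some unimodular phase achieves value <= r. *)
Definition D_le (n : nat) (A B : 'M[C]_(2 ^ n)) (r : C) : Prop :=
  exists c : C, `|c| = 1 /\ Dfun A B c <= r.

End Qubits.
Arguments tensorT {C n} T V.

From HB Require Import structures.
From mathcomp Require Import all_boot all_order all_algebra.
From mathcomp Require Import zify ring.
Set Implicit Arguments. Unset Strict Implicit. Unset Printing Implicit Defensive.
Import Order.TTheory GRing.Theory Num.Theory.
Local Open Scope ring_scope.

(* Let U be an n-qubit unitary, N = 2^n, T a set of qubits, K = 2^|T^c|, and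
   s the Pauli weight of U on T: the sum of |mu_x(U)|^2 over the Pauli
   strings x supported in T.  Norms are Hilbert-Schmidt norms.
   1. (Parseval) The projection A of U onto the span of those Pauli strings
      has the form W (x) I and satisfies ||U - A||^2 = N (1 - s).
   2. (Partial trace) For every Y, ||U - Y (x) I||^2 >= N - ||G||^2 / K,
      where G = Tr_{T^c} U; and every singular value of G is at most K, as G
      is a sum of K diagonal blocks of U.  Taking Y = W gives
      N s <= ||G||^2 / K <= (sum of the singular values of G).
   3. (Polar decomposition) If G = X diag(sg) P is a singular value
      decomposition, V = X P is unitary and ||U - V (x) I||^2 = 2N - 2 sum sg
      <= 2N (1 - s) <= 2N delta, so D(U, V (x) I) <= sqrt delta. *)

Lemma bits_inj n i j : (i < 2 ^ n)%N -> (j < 2 ^ n)%N ->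
  (forall m, (m < n)%N -> odd (i %/ 2 ^ m) = odd (j %/ 2 ^ m)) -> i = j.
Proof.
elim: n i j => [|n IH] i j.
  by rewrite expn0 !ltnS !leqn0 => /eqP -> /eqP ->.
move=> Hi Hj Hbits.
have Hodd : odd i = odd j by have := Hbits 0%N erefl; rewrite expn0 !divn1.
have Hhalf : i./2 = j./2.
  apply: IH; try by rewrite -divn2 ltn_divLR // -expnSr.
  by move=> m Hm; rewrite -!divn2 -!divnMA -expnS; apply: Hbits.
by rewrite -(odd_double_half i) -(odd_double_half j) Hodd Hhalf.
Qed.

Lemma qbit_inj n (i j : 'I_(2 ^ n)) :
  (forall k : 'I_n, qbit i k = qbit j k) -> i = j.
Proof.
move=> Hq; apply/val_inj/(@bits_inj n); rewrite ?ltn_ord // => m Hm.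
have Hk : (n.-1 - m < n)%N by lia.
have := Hq (Ordinal Hk); rewrite /qbit /=.
by have -> : (n.-1 - (n.-1 - m) = m)%N by lia.
Qed.

Definition push_qbit n (i : nat) (acc : nat) (k : 'I_n) : nat :=
  (acc.*2 + qbit i k)%N.

Lemma push_qbits_lt n i (s : seq 'I_n) :
  (foldl (push_qbit i) 0%N s < 2 ^ size s)%N.
Proof.
elim/last_ind: s => [|s k IH]; first by rewrite expn0.
rewrite foldl_rcons size_rcons expnS /push_qbit.
have := leq_b1 (qbit i k); rewrite -muln2; move: IH.
set a := foldl _ _ _; set b := nat_of_bool _; lia.
Qed.

Lemma push_qbits_eq n i j (s : seq 'I_n) :
  foldl (push_qbit i) 0%N s = foldl (push_qbit j) 0%N s <->
  {in s, forall k, qbit i k = qbit j k}.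
Proof.
elim/last_ind: s => [|s k IH]; first by split => // _ k; rewrite in_nil.
rewrite !foldl_rcons /push_qbit; split => [E | Hs].
  have Ek : qbit i k = qbit j k.
    by have := congr1 odd E; rewrite !oddD !odd_double /= !oddb.
  have /IH Es : foldl (push_qbit i) 0%N s = foldl (push_qbit j) 0%N s.
    by have := congr1 half E; rewrite ![(_.*2 + _)%N]addnC !half_bit_double.
  by move=> l; rewrite mem_rcons in_cons => /orP [/eqP -> | /Es].
have /IH -> : {in s, forall l, qbit i l = qbit j l}.
  by move=> l Hl; apply: Hs; rewrite mem_rcons in_cons Hl orbT.
by rewrite Hs // mem_rcons in_cons eqxx.
Qed.

Lemma restr_eq n (S : {set 'I_n}) i j :
  restr S i = restr S j <-> {in S, forall k, qbit i k = qbit j k}.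
Proof.
have Hlt l : (foldl (push_qbit l) 0%N (enum S) < 2 ^ #|S|)%N.
  by rewrite cardE push_qbits_lt.
have -> : (restr S i = restr S j) <->
    (foldl (push_qbit i) 0%N (enum S) = foldl (push_qbit j) 0%N (enum S)).
  rewrite /push_qbit in Hlt *.
  split=> [/(congr1 val) /= | E]; first by rewrite !modn_small.
  by apply: ord_inj; rewrite /= E.
rewrite push_qbits_eq.
by split=> H k Hk; apply: H; rewrite ?mem_enum // -mem_enum.
Qed.
Arguments restr_eq {n S i j}.

Section SplitIndex.
Variables (n : nat) (T : {set 'I_n}).
Local Notation M := (2 ^ #|T|)%N.
Local Notation K := (2 ^ #|~: T|)%N.

Definition split_index (i : 'I_(2 ^ n)) : 'I_M * 'I_K :=
  (restr T i, restr (~: T) i).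

Lemma split_index_inj : injective split_index.
Proof.
move=> i j E; apply: qbit_inj => k.
have /restr_eq HT : restr T i = restr T j := congr1 fst E.
have /restr_eq HTc : restr (~: T) i = restr (~: T) j := congr1 snd E.
by case: (boolP (k \in T)) => Hk; [apply: HT | apply: HTc; rewrite inE Hk].
Qed.

Lemma card_split : (M * K = 2 ^ n)%N.
Proof. by rewrite -expnD cardsC card_ord. Qed.

Lemma split_index_bij : bijective split_index.
Proof.
by apply: (inj_card_bij split_index_inj); rewrite card_prod !card_ord card_split.
Qed.

Definition join_index (p : 'I_M * 'I_K) : 'I_(2 ^ n) :=
  odflt (Ordinal (expn_gt0 2 n)) [pick i | split_index i == p].

Lemma join_indexK : cancel join_index split_index.
Proof.
move=> p; rewrite /join_index; case: pickP => [i /eqP // | Hnone].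
by case: split_index_bij => g _ gK; have := Hnone (g p); rewrite gK eqxx.
Qed.

Lemma split_indexK : cancel split_index join_index.
Proof. by move=> i; apply: split_index_inj; rewrite join_indexK. Qed.

Lemma restr_join a c : restr T (join_index (a, c)) = a.
Proof. by have := join_indexK (a, c); case. Qed.

Lemma restrC_join a c : restr (~: T) (join_index (a, c)) = c.
Proof. by have := join_indexK (a, c); case. Qed.

Lemma sum_split (R : nmodType) (F : 'I_(2 ^ n) -> R) :
  \sum_i F i = \sum_a \sum_c F (join_index (a, c)).
Proof.
rewrite (reindex join_index); first by rewrite pair_bigA.
by apply: onW_bij; exists split_index; [apply: join_indexK | apply: split_indexK].
Qed.

End SplitIndex.

Section HilbertSchmidt.
Variable C : numClosedFieldType.

Lemma sum_kron k (F : 'I_k -> C) c : \sum_d F d * (c == d)%:R = F c.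
Proof.
rewrite (bigD1 c) //= eqxx mulr1 big1 ?addr0 // => d Hd.
by rewrite eq_sym (negbTE Hd) mulr0.
Qed.

Lemma re_dot_le m (a w : 'I_m -> C) :
  \sum_i ((a i)^* * w i + a i * (w i)^*) <=
  \sum_i `|a i| ^+ 2 + \sum_i `|w i| ^+ 2.
Proof.
rewrite -big_split /=; apply: ler_sum => i _.
rewrite -subr_ge0 !normCK.
have -> : a i * (a i)^* + w i * (w i)^* - ((a i)^* * w i + a i * (w i)^*) =
          (a i - w i) * (a i - w i)^* by rewrite rmorphB /=; ring.
exact: mul_conjC_ge0.
Qed.

Section Square.
Variable m : nat.
Implicit Types X Y Z U : 'M[C]_m.

Definition hsdot X Y : C := \sum_i \sum_j (X i j)^* * Y i j.

Lemma hsdotE X Y : \tr (adj X *m Y) = hsdot X Y.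
Proof.
rewrite /mxtrace /hsdot exchange_big /=; apply: eq_bigr => j _.
by rewrite mxE; apply: eq_bigr => i _; rewrite !mxE.
Qed.

Lemma hsdotC X Y : hsdot Y X = (hsdot X Y)^*.
Proof.
rewrite /hsdot rmorph_sum; apply: eq_bigr => i _; rewrite rmorph_sum.
by apply: eq_bigr => j _; rewrite rmorphM /= conjCK mulrC.
Qed.

Lemma hsdot_ge0 X : 0 <= hsdot X X.
Proof.
by apply: sumr_ge0 => i _; apply: sumr_ge0 => j _; rewrite mulrC mul_conjC_ge0.
Qed.

Lemma hsdot_unitary U : unitary U -> hsdot U U = m%:R.
Proof. by move=> /eqP HU; rewrite -hsdotE HU mxtrace1. Qed.

Lemma hsdotBl X Y Z : hsdot (X - Y) Z = hsdot X Z - hsdot Y Z.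
Proof.
rewrite /hsdot -sumrB; apply: eq_bigr => i _; rewrite -sumrB.
by apply: eq_bigr => j _; rewrite !mxE rmorphB /= mulrBl.
Qed.

Lemma hsdotBr X Y Z : hsdot X (Y - Z) = hsdot X Y - hsdot X Z.
Proof. by rewrite hsdotC hsdotBl rmorphB /= -!hsdotC. Qed.

Lemma hsdotZr a X Y : hsdot X (a *: Y) = a * hsdot X Y.
Proof.
rewrite /hsdot mulr_sumr; apply: eq_bigr => i _; rewrite mulr_sumr.
by apply: eq_bigr => j _; rewrite mxE; ring.
Qed.

Lemma hsdotZl a X Y : hsdot (a *: X) Y = a^* * hsdot X Y.
Proof. by rewrite hsdotC hsdotZr rmorphM /= -hsdotC. Qed.

Lemma hsdot_sumr (I : finType) (P : pred I) (c : I -> C) (S : I -> 'M[C]_m) Z :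
  hsdot Z (\sum_(x | P x) c x *: S x) = \sum_(x | P x) c x * hsdot Z (S x).
Proof.
under [RHS]eq_bigr do rewrite /hsdot mulr_sumr.
rewrite /hsdot [RHS]exchange_big /=; apply: eq_bigr => i _.
under [RHS]eq_bigr do rewrite mulr_sumr.
rewrite [RHS]exchange_big /=; apply: eq_bigr => j _.
rewrite summxE mulr_sumr; apply: eq_bigr => x _; rewrite mxE; ring.
Qed.

Lemma hsdot_suml (I : finType) (P : pred I) (c : I -> C) (S : I -> 'M[C]_m) Z :
  hsdot (\sum_(x | P x) c x *: S x) Z = \sum_(x | P x) (c x)^* * hsdot (S x) Z.
Proof.
rewrite hsdotC hsdot_sumr rmorph_sum; apply: eq_bigr => x _.
by rewrite rmorphM /= -hsdotC.
Qed.

Lemma unitary_isometry U (b : 'I_m -> C) : unitary U ->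
  \sum_i `|\sum_j U i j * b j| ^+ 2 = \sum_j `|b j| ^+ 2.
Proof.
move=> /eqP HU.
have Horth l j : \sum_i (U i l)^* * U i j = (j == l)%:R.
  have := congr1 (fun X : 'M_m => X l j) HU; rewrite !mxE eq_sym => <-.
  by apply: eq_bigr => i _; rewrite !mxE.
transitivity (\sum_i \sum_j \sum_l U i j * b j * ((U i l)^* * (b l)^*)).
  apply: eq_bigr => i _; rewrite normCK rmorph_sum mulr_suml.
  apply: eq_bigr => j _; rewrite mulr_sumr; apply: eq_bigr => l _.
  by rewrite rmorphM.
rewrite exchange_big /=; apply: eq_bigr => j _.
rewrite exchange_big /= normCK -(sum_kron (fun l => b j * (b l)^*) j).
apply: eq_bigr => l _; rewrite -Horth mulr_sumr; apply: eq_bigr => i _.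
ring.
Qed.

End Square.
End HilbertSchmidt.

Section PartialTrace.
Variables (C : numClosedFieldType) (n : nat) (T : {set 'I_n}).
Local Notation M := (2 ^ #|T|)%N.
Local Notation K := (2 ^ #|~: T|)%N.
Local Notation join := (@join_index n T).

Definition ptrace (U : 'M[C]_(2 ^ n)) : 'M[C]_M :=
  \matrix_(a, b) \sum_c U (join (a, c)) (join (b, c)).

Lemma tensorT_join (Y : 'M[C]_M) a c b d :
  tensorT T Y (join (a, c)) (join (b, d)) = Y a b * (c == d)%:R.
Proof. by rewrite mxE !restr_join !restrC_join. Qed.

Lemma hsdot_tensorT (Y : 'M[C]_M) (U : 'M[C]_(2 ^ n)) :
  hsdot (tensorT T Y) U = hsdot Y (ptrace U).
Proof.
rewrite /hsdot (sum_split T); apply: eq_bigr => a _.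
under eq_bigr do rewrite (sum_split T).
rewrite exchange_big /=; apply: eq_bigr => b _.
rewrite mxE mulr_sumr; apply: eq_bigr => c _.
rewrite -(sum_kron (fun d => (Y a b)^* * U (join (a, c)) (join (b, d))) c).
by apply: eq_bigr => d _; rewrite tensorT_join rmorphM /= conjC_nat; ring.
Qed.

Lemma ptrace_tensorT (Y : 'M[C]_M) : ptrace (tensorT T Y) = K%:R *: Y.
Proof.
apply/matrixP => a b; rewrite !mxE.
under eq_bigr do rewrite tensorT_join eqxx mulr1.
by rewrite sumr_const card_ord mulr_natl.
Qed.

Lemma hsdot_tensorT_tensorT (Y Y' : 'M[C]_M) :
  hsdot (tensorT T Y) (tensorT T Y') = K%:R * hsdot Y Y'.
Proof.
rewrite hsdot_tensorT ptrace_tensorT /hsdot mulr_sumr; apply: eq_bigr => a _.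
by rewrite mulr_sumr; apply: eq_bigr => b _; rewrite mxE; ring.
Qed.

Definition slice (v : 'I_M -> C) (c : 'I_K) (i : 'I_(2 ^ n)) : C :=
  v (split_index T i).1 * ((split_index T i).2 == c)%:R.

Lemma slice_norm v c :
  \sum_a `|v a| ^+ 2 = 1 -> \sum_i `|slice v c i| ^+ 2 = 1.
Proof.
move=> <-; rewrite (sum_split T); apply: eq_bigr => a _.
rewrite -(sum_kron (fun _ => `|v a| ^+ 2) c); apply: eq_bigr => d _.
rewrite /slice join_indexK /= normrM normr_nat exprMn eq_sym.
by case: (c == d); rewrite ?expr1n ?expr0n.
Qed.

Lemma slice_block (U : 'M[C]_(2 ^ n)) al be c :
  \sum_a \sum_b (al a)^* * U (join (a, c)) (join (b, c)) * be b =
  \sum_i (slice al c i)^* * \sum_j U i j * slice be c j.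
Proof.
rewrite (sum_split T); apply: eq_bigr => a _.
rewrite -(sum_kron (fun d => \sum_b (al a)^* * U (join (a, c)) (join (b, c)) * be b) c).
apply: eq_bigr => d _.
rewrite /slice join_indexK /= (sum_split T) rmorphM /= conjC_nat eq_sym.
case: eqP => [->|_]; last by rewrite !mulr0 mul0r.
rewrite mulr1n mulr1 mulr_sumr; apply: eq_bigr => b _.
rewrite -(sum_kron (fun e => (al a)^* * U (join (a, c)) (join (b, e)) * be b) c).
rewrite mulr_sumr; apply: eq_bigr => e _.
by rewrite restr_join restrC_join eq_sym; ring.
Qed.

(* The partial trace of a unitary is a contraction up to the factor K:
   2 Re (alpha^dagger (ptrace U) beta) <= 2 K for unit vectors alpha, beta,
   being a sum of K matrix elements of U between unit vectors. *)
Lemma ptrace_contraction (U : 'M[C]_(2 ^ n)) (al be : 'I_M -> C) z :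
  unitary U -> \sum_a `|al a| ^+ 2 = 1 -> \sum_b `|be b| ^+ 2 = 1 ->
  z = \sum_a \sum_b (al a)^* * ptrace U a b * be b ->
  z + z^* <= 2 * K%:R.
Proof.
move=> HU Hal Hbe ->.
have -> : \sum_a \sum_b (al a)^* * ptrace U a b * be b =
    \sum_c \sum_a \sum_b (al a)^* * U (join (a, c)) (join (b, c)) * be b.
  rewrite [RHS]exchange_big /=; apply: eq_bigr => a _.
  rewrite [RHS]exchange_big /=; apply: eq_bigr => b _.
  by rewrite mxE mulr_sumr mulr_suml.
have -> : 2 * K%:R = \sum_(c < K) (2 : C).
  by rewrite sumr_const card_ord mulr_natr.
rewrite rmorph_sum -big_split /=; apply: ler_sum => c _.
rewrite slice_block rmorph_sum -big_split /=.
under eq_bigr do rewrite [X in _ + X]rmorphM /= conjCK.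
apply: le_trans (re_dot_le _ _) _.
by rewrite slice_norm // unitary_isometry // slice_norm.
Qed.

End PartialTrace.

Section Pauli.
Variables (C : numClosedFieldType) (n : nat).
Local Notation N := (2 ^ n)%N.

Lemma pauli1_conj (a : 'I_4) b c : (pauli1 C a b c)^* = pauli1 C a c b.
Proof.
case: a => [[|[|[|[|m]]]] Ha] //; case: b; case: c;
  by rewrite /pauli1 /= ?conjC_nat ?rmorphN /= ?conjCi ?opprK ?conjC0 ?conjC1.
Qed.

Lemma pauli1_orth (a a' : 'I_4) :
  \sum_b \sum_c pauli1 C a c b * pauli1 C a' b c = 2 * (a == a')%:R.
Proof.
case: a => [[|[|[|[|m]]]] Ha] //; case: a' => [[|[|[|[|m']]]] Ha'] //;
  rewrite -val_eqE /= !big_bool /pauli1 /= ?mulr0n ?mulr1n ?mul0r ?mulr0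
    ?add0r ?addr0 ?mul1r ?mulr1 ?mulrN ?mulNr ?mulCii ?opprK;
  ring.
Qed.

Definition qbits (i : 'I_N) : {ffun 'I_n -> bool} := [ffun k => qbit i k].

Lemma qbits_bij : bijective qbits.
Proof.
apply: inj_card_bij; last by rewrite card_ffun card_bool !card_ord.
by move=> i j /ffunP Hij; apply: qbit_inj => k; have := Hij k; rewrite !ffunE.
Qed.

Lemma sum_prod_qbits (F : 'I_n -> bool -> bool -> C) :
  \sum_(i : 'I_N) \sum_(j : 'I_N) \prod_k F k (qbit i k) (qbit j k) =
  \prod_k \sum_b \sum_c F k b c.
Proof.
have sum_qbits (G : {ffun 'I_n -> bool} -> C) :
    \sum_(i : 'I_N) G (qbits i) = \sum_g G g.
  by rewrite [RHS](reindex qbits) //; apply: onW_bij; apply: qbits_bij.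
transitivity (\sum_(g : {ffun 'I_n -> bool}) \prod_k \sum_c F k (g k) c).
  rewrite -(sum_qbits (fun g => \prod_k \sum_c F k (g k) c)).
  apply: eq_bigr => i _.
  rewrite [RHS]bigA_distr_bigA -(sum_qbits (fun h => \prod_k F k (qbits i k) (h k))).
  by apply: eq_bigr => j _; apply: eq_bigr => k _; rewrite !ffunE.
by rewrite bigA_distr_bigA.
Qed.

Lemma pauli_conj (x : {ffun 'I_n -> 'I_4}) i j :
  (pauli C x i j)^* = pauli C x j i.
Proof. by rewrite !mxE rmorph_prod; apply: eq_bigr => k _; apply: pauli1_conj. Qed.

Lemma hsdot_pauli (x y : {ffun 'I_n -> 'I_4}) :
  hsdot (pauli C x) (pauli C y) = N%:R * (x == y)%:R.
Proof.
pose F k b c := pauli1 C (x k) c b * pauli1 C (y k) b c.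
transitivity (\sum_(i : 'I_N) \sum_(j : 'I_N) \prod_k F k (qbit i k) (qbit j k)).
  apply: eq_bigr => i _; apply: eq_bigr => j _.
  by rewrite pauli_conj !mxE -big_split.
rewrite sum_prod_qbits; under eq_bigr do rewrite pauli1_orth.
rewrite big_split /= prodr_const card_ord natrX; congr (_ * _).
have [->|Hxy] := eqVneq x y; first by rewrite big1 // => k _; rewrite eqxx.
have [k Hk] : exists k, x k != y k.
  by apply/existsP; rewrite -negb_forall; apply: contra Hxy => /forallP H;
     apply/eqP/ffunP => k; apply/eqP.
by rewrite (bigD1 k) //= (negbTE Hk) mul0r.
Qed.

Lemma hsdot_pauli_mu (x : {ffun 'I_n -> 'I_4}) (U : 'M[C]_N) :
  hsdot (pauli C x) U = N%:R * mu x U.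
Proof.
rewrite /mu mulrA divff ?mul1r ?pnatr_eq0 -?lt0n ?expn_gt0 //.
rewrite /hsdot /mxtrace exchange_big /=; apply: eq_bigr => j _.
by rewrite mxE; apply: eq_bigr => i _; rewrite pauli_conj.
Qed.

End Pauli.

Section PauliProjection.
Variables (C : numClosedFieldType) (n : nat) (T : {set 'I_n}).
Local Notation N := (2 ^ n)%N.
Local Notation K := (2 ^ #|~: T|)%N.
Local Notation join := (@join_index n T).

(* A Pauli string supported in T acts as the identity on the qubits outside T:
   its entries only depend on the T-parts of the indices, up to the delta on
   the remaining parts. *)
Lemma pauli_supported (x : {ffun 'I_n -> 'I_4}) (c0 : 'I_K) i j :
  in_Z4T T x ->
  pauli C x i j = pauli C x (join (restr T i, c0)) (join (restr T j, c0)) *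
                  (restr (~: T) i == restr (~: T) j)%:R.
Proof.
move=> /forallP Hx.
have Hx0 k : k \in ~: T -> x k = 0%R.
  by rewrite inE => HkT; apply/eqP; move: (Hx k); rewrite (negbTE HkT) implybF negbK.
have /restr_eq Hi : restr T (join (restr T i, c0)) = restr T i by rewrite restr_join.
have /restr_eq Hj : restr T (join (restr T j, c0)) = restr T j by rewrite restr_join.
have /restr_eq Hc0 :
    restr (~: T) (join (restr T i, c0)) = restr (~: T) (join (restr T j, c0)).
  by rewrite !restrC_join.
case: eqP => [/restr_eq Hij | Hij]; last first.
  have [k Hk Hb] : exists2 k, k \in ~: T & qbit i k != qbit j k.
    apply/exists_inP; rewrite -negb_forall_in; apply/negP => /forall_inP H.
    by apply: Hij; apply/restr_eq => k Hk; apply/eqP/H.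
  by rewrite mulr0 mxE (bigD1 k) //= Hx0 // /pauli1 /= (negbTE Hb) mul0r.
rewrite mulr1 !mxE; apply: eq_bigr => k _.
case: (boolP (k \in T)) => Hk; first by rewrite Hi // Hj.
have HkC : k \in ~: T by rewrite inE Hk.
by rewrite Hx0 // /pauli1 /= Hij // Hc0 // !eqxx.
Qed.

Definition pauli_proj (U : 'M[C]_N) : 'M[C]_N :=
  \sum_(x | in_Z4T T x) mu x U *: pauli C x.

Definition pauli_weight (U : 'M[C]_N) : C :=
  \sum_(x | in_Z4T T x) `|mu x U| ^+ 2.

Lemma pauli_proj_tensorT (U : 'M[C]_N) : exists W, pauli_proj U = tensorT T W.
Proof.
pose c0 := Ordinal (expn_gt0 2 #|~: T|).
exists (\matrix_(a, b) pauli_proj U (join (a, c0)) (join (b, c0))).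
have scaleE a (X : 'M[C]_N) k l : (a *: X) k l = a * X k l by rewrite mxE.
apply/matrixP => i j; rewrite !mxE !summxE mulr_suml.
apply: eq_bigr => x Hx.
by rewrite !scaleE (pauli_supported c0 _ _ Hx) mulrA.
Qed.

Lemma dist_pauli_proj (U : 'M[C]_N) : unitary U ->
  hsdot (U - pauli_proj U) (U - pauli_proj U) = N%:R * (1 - pauli_weight U).
Proof.
move=> HU; set P := pauli_proj U; set s := pauli_weight U.
have HUP : hsdot U P = N%:R * s.
  rewrite hsdot_sumr mulr_sumr; apply: eq_bigr => x _.
  by rewrite hsdotC hsdot_pauli_mu rmorphM /= conjC_nat normCK; ring.
have HPU : hsdot P U = N%:R * s.
  by rewrite hsdotC HUP geC0_conj // mulr_ge0 ?ler0n ?sumr_ge0 // => x _;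
     rewrite exprn_ge0.
have HPP : hsdot P P = N%:R * s.
  rewrite hsdot_suml mulr_sumr; apply: eq_bigr => x Hx.
  rewrite hsdot_sumr (bigD1 x) //= big1 ?addr0 => [|y /andP [_ Hy]].
    by rewrite hsdot_pauli eqxx (_ : true%:R = 1 :> C) // normCK; ring.
  by rewrite hsdot_pauli eq_sym (negbTE Hy) !mulr0.
by rewrite hsdotBl !hsdotBr hsdot_unitary // HUP HPU HPP; ring.
Qed.

End PauliProjection.

Section TensorApproximation.
Variables (C : numClosedFieldType) (n : nat) (T : {set 'I_n}).
Local Notation N := (2 ^ n)%N.
Local Notation M := (2 ^ #|T|)%N.
Local Notation K := (2 ^ #|~: T|)%N.

(* No operator of the form Y (x) I is closer to the unitary U than what the
   partial trace allows: ||U - Y (x) I||^2 >= N - ||ptrace U||^2 / K, with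
   equality for Y = ptrace U / K (complete the square). *)
Lemma dist_tensorT_ge (U : 'M[C]_N) (Y : 'M[C]_M) : unitary U ->
  N%:R - (K%:R)^-1 * hsdot (ptrace T U) (ptrace T U) <=
  hsdot (U - tensorT T Y) (U - tensorT T Y).
Proof.
move=> HU; set G := ptrace T U.
have HK : (K%:R : C) != 0 by rewrite pnatr_eq0 -lt0n expn_gt0.
rewrite hsdotBl !hsdotBr (hsdot_unitary HU) hsdot_tensorT_tensorT [hsdot U _]hsdotC.
rewrite hsdot_tensorT -subr_ge0 -/G.
have -> : N%:R - (hsdot Y G)^* - (hsdot Y G - K%:R * hsdot Y Y) -
    (N%:R - (K%:R)^-1 * hsdot G G) =
    (K%:R)^-1 * hsdot (K%:R *: Y - G) (K%:R *: Y - G).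
  rewrite hsdotBl !hsdotBr !hsdotZl !hsdotZr [hsdot G Y]hsdotC conjC_nat.
  by field.
by rewrite mulr_ge0 ?invr_ge0 ?ler0n ?hsdot_ge0.
Qed.

End TensorApproximation.

Section Completion.
Variables (C : numClosedFieldType) (m : nat).
Implicit Types X Z : 'M[C]_m.

Definition gram Z k l : C := \sum_a (Z a k)^* * Z a l.

Lemma unitary_gramP X : reflect (forall k l, gram X k l = (k == l)%:R) (unitary X).
Proof.
apply: (iffP eqP) => [HX k l | Hg].
  by have := congr1 (fun Y : 'M_m => Y k l) HX; rewrite !mxE => <-;
     apply: eq_bigr => a _; rewrite !mxE.
by apply/matrixP => k l; rewrite !mxE -Hg; apply: eq_bigr => a _; rewrite !mxE.
Qed.

Lemma gram_eq0 Z k : gram Z k k = 0 -> forall a, Z a k = 0.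
Proof.
move=> /psumr_eq0P Hz a; apply/eqP; rewrite -mul_conjC_eq0 mulrC.
by apply/eqP/Hz => // b _; rewrite mulrC mul_conjC_ge0.
Qed.

(* If some column of Z vanishes, Z is singular, so some unit vector w is
   orthogonal to all columns of Z. *)
Lemma exists_orthogonal_unit Z k0 : gram Z k0 k0 = 0 ->
  exists w : 'I_m -> C,
    \sum_a `|w a| ^+ 2 = 1 /\ forall j, \sum_a w a * (Z a j)^* = 0.
Proof.
move=> /gram_eq0 Zk0.
have Hdet : \det Z = 0.
  by rewrite (expand_det_col Z k0) big1 // => a _; rewrite Zk0 mul0r.
have Hrk : (\rank Z < m)%N.
  rewrite ltn_neqAle rank_leq_row andbT; apply/negP => /eqP Hr.
  have : Z \in unitmx by rewrite -row_free_unit /row_free Hr.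
  by rewrite unitmxE unitfE Hdet eqxx.
have : kermx (map_mx Num.conj Z) != 0.
  by rewrite -mxrank_eq0 mxrank_ker mxrank_map -lt0n subn_gt0.
case/rowV0Pn => v; rewrite sub_kermx => /eqP Hv Hv0.
have Horth j : \sum_a v 0 a * (Z a j)^* = 0.
  have := congr1 (fun Y : 'rV_m => Y 0 j) Hv; rewrite !mxE => Hj; rewrite -[RHS]Hj.
  by apply: eq_bigr => a _; rewrite mxE.
pose t := \sum_a `|v 0 a| ^+ 2.
have Ht : 0 < t.
  rewrite lt_def sumr_ge0 ?andbT => [|a _]; last by rewrite exprn_ge0.
  apply: contra Hv0 => /eqP /psumr_eq0P Ht0; apply/eqP/rowP => a; rewrite mxE.
  have /eqP : `|v 0 a| ^+ 2 = 0 by apply: Ht0 => // b _; rewrite exprn_ge0.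
  by rewrite expf_eq0 /= normr_eq0 => /eqP.
pose s := (sqrtC t)^-1.
have Hs : s ^+ 2 * t = 1 by rewrite /s exprVn sqrtCK mulVf // gt_eqF.
have Hsr : s^* = s.
  by apply/CrealP; rewrite /s realV; apply: sqrtC_real; apply: ltW.
exists (fun a => v 0 a * s); split.
  rewrite -Hs /t mulr_sumr; apply: eq_bigr => a _.
  have s0 : 0 <= s by rewrite invr_ge0 sqrtC_ge0 ltW.
  by rewrite normrM exprMn (ger0_norm s0) mulrC.
move=> j; transitivity (s * \sum_a v 0 a * (Z a j)^*); last by rewrite Horth mulr0.
by rewrite mulr_sumr; apply: eq_bigr => a _; ring.
Qed.

Definition orthonormal_or_zero Z : Prop :=
  (forall k l, k != l -> gram Z k l = 0) /\
  (forall k, gram Z k k = 0 \/ gram Z k k = 1).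

Definition zero_columns Z : {set 'I_m} := [set k | gram Z k k == 0].

Lemma replace_zero_column Z k0 :
  orthonormal_or_zero Z -> k0 \in zero_columns Z ->
  exists Z', [/\ orthonormal_or_zero Z', zero_columns Z' = zero_columns Z :\ k0
               & forall k, k != k0 -> forall a, Z' a k = Z a k].
Proof.
move=> [Hoff Hdiag]; rewrite inE => /eqP Hk0.
have [w [Hw1 Hw]] := exists_orthogonal_unit Hk0.
pose Z' := \matrix_(a, k) if k == k0 then w a else Z a k.
have Z'same k l : k != k0 -> l != k0 -> gram Z' k l = gram Z k l.
  by move=> Hk Hl; apply: eq_bigr => a _; rewrite !mxE (negbTE Hk) (negbTE Hl).
have Z'new k : k != k0 -> gram Z' k k0 = 0.
  move=> Hk; rewrite -(Hw k); apply: eq_bigr => a _.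
  by rewrite !mxE eqxx (negbTE Hk) mulrC.
have Z'k0 : gram Z' k0 k0 = 1.
  by rewrite -Hw1; apply: eq_bigr => a _; rewrite !mxE eqxx normCK mulrC.
have Z'sym k l : gram Z' l k = (gram Z' k l)^*.
  rewrite /gram rmorph_sum; apply: eq_bigr => a _.
  by rewrite rmorphM /= conjCK mulrC.
exists Z'; split; first split.
- move=> k l Hkl; have [El | Hl] := eqVneq l k0; first by rewrite El Z'new // -El.
  have [Ek | Hk] := eqVneq k k0; first by rewrite Z'sym Ek Z'new // conjC0.
  by rewrite Z'same // Hoff.
- by move=> k; have [-> | Hk] := eqVneq k k0; [right | rewrite Z'same //].
- apply/setP => k; rewrite !inE.
  by have [-> | Hk] := eqVneq k k0; rewrite /= ?Z'k0 ?oner_eq0 ?Z'same.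
- by move=> k Hk a; rewrite mxE (negbTE Hk).
Qed.

Lemma complete_unitary Z : orthonormal_or_zero Z ->
  exists X, unitary X /\ forall k, gram Z k k = 1 -> forall a, X a k = Z a k.
Proof.
have [c] := ubnP #|zero_columns Z|.
elim: c Z => [//|c IH] Z Hc [Hoff Hdiag].
have [H0 | [k0 Hk0]] := set_0Vmem (zero_columns Z).
  exists Z; split => //; apply/unitary_gramP => k l.
  have [<- | Hkl] := eqVneq k l; last by rewrite Hoff.
  case: (Hdiag k) => // Hk.
  by have := in_set0 k; rewrite -H0 inE Hk eqxx.
have [Z' [HZ' Hzero Hsame]] := replace_zero_column (conj Hoff Hdiag) Hk0.
have [|X [HX HXZ]] := IH Z' _ HZ'.
  by move: Hc; rewrite Hzero (cardsD1 k0) Hk0.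
exists X; split => // k Hk a.
have Hkk0 : k != k0.
  by apply/eqP => Ek; move: Hk0; rewrite inE -Ek Hk oner_eq0.
rewrite HXZ ?Hsame // -Hk; apply: eq_bigr => b _; rewrite !Hsame //.
Qed.

End Completion.

Section SingularValues.
Variables (C : numClosedFieldType) (m : nat).
Implicit Types A B G R : 'M[C]_m.

Lemma adjM A B : adj (A *m B) = adj B *m adj A.
Proof. by rewrite /adj map_mxM trmx_mul. Qed.

Lemma adjK A : adj (adj A) = A.
Proof. by apply/matrixP => i j; rewrite !mxE conjCK. Qed.

Lemma adj_trmxC A : map_mx Num.conj A^T = adj A.
Proof. by apply/matrixP => i j; rewrite !mxE. Qed.

Lemma unitary_mulV A : unitary A -> A *m adj A = 1%:M.
Proof. by move=> /eqP /mulmx1C. Qed.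

Lemma unitary_mul A B : unitary A -> unitary B -> unitary (A *m B).
Proof.
move=> /eqP HA /eqP HB.
by rewrite /unitary adjM -mulmxA (mulmxA (adj A)) HA mul1mx HB.
Qed.

(* A matrix with orthogonal columns is a unitary times a nonnegative
   diagonal matrix (normalize the nonzero columns, complete the rest). *)
Lemma orthogonal_columns_factor R (d : 'I_m -> C) :
  (forall k l, gram R k l = d k *+ (k == l)) ->
  exists X, exists sg : 'I_m -> C,
    [/\ unitary X, forall k, 0 <= sg k & R = X *m diag_mx (\row_k sg k)].
Proof.
move=> HR.
have d_ge0 k : 0 <= d k.
  have := HR k k; rewrite eqxx mulr1n => <-.
  by apply: sumr_ge0 => a _; rewrite mulrC mul_conjC_ge0.
pose sg k := sqrtC (d k).
have sg_real k : (sg k)^* = sg k by rewrite geC0_conj ?sqrtC_ge0.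
have sgK k : sg k != 0 -> (sg k)^-1 * (sg k)^-1 * d k = 1.
  by move=> Hs; rewrite -(sqrtCK (d k)) -/(sg k); field.
pose Z : 'M[C]_m := \matrix_(a, k) (R a k / sg k).
have gramZ k l : gram Z k l = (sg k)^-1 * (sg l)^-1 * gram R k l.
  rewrite /gram mulr_sumr; apply: eq_bigr => a _.
  by rewrite !mxE rmorphM /= fmorphV /= sg_real; ring.
have [|X [HX HXZ]] := @complete_unitary _ _ Z.
  split=> [k l Hkl | k]; first by rewrite gramZ HR (negbTE Hkl) mulr0n mulr0.
  rewrite gramZ HR eqxx mulr1n.
  have [Hs | Hs] := eqVneq (sg k) 0; last by right; apply: sgK.
  by left; rewrite Hs invr0 !mul0r.
exists X, sg; split => //; first by move=> k; rewrite sqrtC_ge0.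
apply/matrixP => a k; rewrite mul_mx_diag !mxE.
have [Hs | Hs] := eqVneq (sg k) 0.
  rewrite Hs mulr0; apply: gram_eq0 a.
  by rewrite HR eqxx mulr1n; apply/eqP; rewrite -sqrtC_eq0 -/(sg k) Hs.
by rewrite HXZ ?gramZ ?HR ?eqxx ?mulr1n ?sgK // mxE divfK.
Qed.

(* Singular value decomposition G = X diag(sg) P, from the spectral
   decomposition of the normal matrix G^dagger G. *)
Lemma svd G : exists X P : 'M[C]_m, exists sg : 'I_m -> C,
  [/\ unitary X, unitary P, forall k, 0 <= sg k &
      G = X *m diag_mx (\row_k sg k) *m P].
Proof.
pose H := adj G *m G.
have Hnormal : H \is normalmx.
  by apply/normalmxP; rewrite adj_trmxC /H adjM adjK.
pose Q := spectralmx H; pose d := spectral_diag H.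
have QQ : Q *m adj Q = 1%:M by rewrite -adj_trmxC; apply/unitarymxP/spectral_unitarymx.
have HQ : H = adj Q *m diag_mx d *m Q.
  by rewrite -adj_trmxC -invmx_unitary ?spectral_unitarymx //; apply/orthomx_spectralP.
pose R := G *m adj Q.
have RR : adj R *m R = diag_mx d.
  rewrite /R adjM adjK -!mulmxA (mulmxA (adj G)) -/H HQ.
  by rewrite !mulmxA QQ mul1mx -mulmxA QQ mulmx1.
have [|X [sg [HX sg_ge0 RXD]]] := @orthogonal_columns_factor R (d 0).
  move=> k l; have := congr1 (fun Y : 'M_m => Y k l) RR; rewrite !mxE => <-.
  by apply: eq_bigr => a _; rewrite !mxE.
exists X, Q, sg; split => //; first by apply/eqP/mulmx1C.
by rewrite -RXD /R -mulmxA (mulmx1C QQ) mulmx1.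
Qed.

Section Consequences.
Variables (G X P : 'M[C]_m) (sg : 'I_m -> C).
Hypotheses (HX : unitary X) (HP : unitary P) (sg_ge0 : forall k, 0 <= sg k).
Hypothesis HG : G = X *m diag_mx (\row_k sg k) *m P.
Local Notation D := (diag_mx (\row_k sg k)).

Let sg_real k : (sg k)^* = sg k. Proof. exact: geC0_conj. Qed.

Let adjD : adj D = D.
Proof.
apply/matrixP => i j; rewrite !mxE eq_sym.
by case: eqP => [->|_]; rewrite ?mulr1n ?mulr0n ?conjC0 ?sg_real.
Qed.

Let XX : adj X *m X = 1%:M. Proof. exact/eqP. Qed.

Lemma hsdot_polar : hsdot (X *m P) G = \sum_k sg k.
Proof.
rewrite -hsdotE adjM HG !mulmxA -(mulmxA (adj P)) XX mulmx1.
rewrite mxtrace_mulC mulmxA unitary_mulV // mul1mx mxtrace_diag.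
by apply: eq_bigr => k _; rewrite mxE.
Qed.

Lemma hsdot_svd : hsdot G G = \sum_k sg k ^+ 2.
Proof.
rewrite -hsdotE HG !adjM !mulmxA -(mulmxA (adj P *m adj D)) XX mulmx1.
rewrite mxtrace_mulC !mulmxA unitary_mulV // mul1mx adjD.
rewrite /mxtrace; apply: eq_bigr => k _.
by rewrite mul_mx_diag !mxE eqxx mulr1n expr2.
Qed.

(* Each singular value is a matrix element of G between unit vectors. *)
Lemma singular_value_coef k :
  sg k = \sum_a \sum_b (X a k)^* * G a b * (P k b)^*.
Proof.
have E : adj X *m G *m adj P = D.
  by rewrite HG !mulmxA XX mul1mx -mulmxA unitary_mulV // mulmx1.
have := congr1 (fun Y : 'M_m => Y k k) E; rewrite !mxE eqxx mulr1n => <-.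
rewrite exchange_big /=; apply: eq_bigr => b _; rewrite !mxE mulr_suml.
by apply: eq_bigr => a _; rewrite !mxE.
Qed.

Lemma unitary_col_norm k : \sum_a `|X a k| ^+ 2 = 1.
Proof.
have := elimT (unitary_gramP X) HX k k; rewrite eqxx mulr1n => <-.
by apply: eq_bigr => a _; rewrite normCK mulrC.
Qed.

Lemma unitary_row_norm k : \sum_b `|(P k b)^*| ^+ 2 = 1.
Proof.
have := congr1 (fun Y : 'M_m => Y k k) (unitary_mulV HP).
rewrite !mxE eqxx mulr1n => <-.
by apply: eq_bigr => b _; rewrite !mxE normCK conjCK mulrC.
Qed.

End Consequences.
End SingularValues.

Lemma sum_sq_le (C : numClosedFieldType) m (sg : 'I_m -> C) (b : C) :
  (forall k, 0 <= sg k <= b) -> \sum_k sg k ^+ 2 <= b * \sum_k sg k.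
Proof.
move=> Hsg; rewrite mulr_sumr; apply: ler_sum => k _.
by have /andP [H0 Hb] := Hsg k; rewrite expr2 ler_wpM2r.
Qed.

(* From ||A - B||^2 <= 2 N delta to D(A, B) <= sqrt delta <= 2 sqrt delta,
   using the phase e^{i theta} = 1. *)
Lemma D_le_of_dist (C : numClosedFieldType) n (A B : 'M[C]_(2 ^ n)) delta :
  hsdot (A - B) (A - B) <= 2 * (2 ^ n)%:R * delta ->
  D_le A B (2 * sqrtC delta).
Proof.
move=> Hdist; exists 1; split; first by rewrite normr1.
have H2N : (0 : C) < 2 * (2 ^ n)%:R by rewrite -natrM ltr0n muln_gt0 expn_gt0.
have Hdelta : 0 <= delta.
  by have := le_trans (hsdot_ge0 _) Hdist; rewrite pmulr_rge0.
rewrite /Dfun /fnorm scale1r hsdotE natrM.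
apply: (@le_trans _ _ ((sqrtC (2 * (2 ^ n)%:R))^-1 * sqrtC (2 * (2 ^ n)%:R * delta))).
  apply: ler_wpM2l; first by rewrite invr_ge0 sqrtC_ge0 ltW.
  by rewrite ler_sqrtC ?nnegrE ?hsdot_ge0 // mulr_ge0 // ltW.
rewrite (@sqrtCM _ (2 * (2 ^ n)%:R) delta) ?nnegrE ?(ltW H2N) //.
rewrite mulKf ?sqrtC_eq0 ?gt_eqF //.
by rewrite -subr_ge0 (_ : 2 * sqrtC delta - sqrtC delta = sqrtC delta) ?sqrtC_ge0 //; ring.
Qed.

Section MainArgument.
Variables (C : numClosedFieldType) (n : nat) (T : {set 'I_n}).
Local Notation N := (2 ^ n)%N.
Local Notation M := (2 ^ #|T|)%N.
Local Notation K := (2 ^ #|~: T|)%N.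
Variable U : 'M[C]_N.
Hypothesis HU : unitary U.
Variables (X P : 'M[C]_M) (sg : 'I_M -> C).
Hypotheses (HX : unitary X) (HP : unitary P) (sg_ge0 : forall k, 0 <= sg k).
Hypothesis HG : ptrace T U = X *m diag_mx (\row_k sg k) *m P.

Lemma singular_value_le k : sg k <= K%:R.
Proof.
have := ptrace_contraction HU (unitary_col_norm HX k) (unitary_row_norm HP k)
  (singular_value_coef HX HP HG k).
by rewrite geC0_conj // -mulr2n -[sg k *+ 2]mulr_natl ler_pM2l ?ltr0n.
Qed.

(* The Pauli weight on T is bounded by the nuclear norm of ptrace U / N:
   N s = N - ||U - A||^2 <= ||ptrace U||^2 / K <= sum of singular values. *)
Lemma pauli_weight_le : N%:R * pauli_weight T U <= \sum_k sg k.
Proof.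
have HK : (0 : C) < K%:R by rewrite ltr0n expn_gt0.
have [W HW] := pauli_proj_tensorT T U.
have := dist_tensorT_ge W HU; rewrite -HW dist_pauli_proj //.
rewrite (hsdot_svd HX HP sg_ge0 HG) mulrBr mulr1 lerD2l lerN2 => Hweight.
apply: le_trans Hweight _; rewrite ler_pdivrMl //.
by apply: sum_sq_le => k; rewrite sg_ge0 singular_value_le.
Qed.

Lemma dist_polar :
  hsdot (U - tensorT T (X *m P)) (U - tensorT T (X *m P)) =
  2 * N%:R - 2 * \sum_k sg k.
Proof.
have Hsum : (\sum_k sg k)^* = \sum_k sg k by rewrite geC0_conj ?sumr_ge0.
rewrite hsdotBl !hsdotBr (hsdot_unitary HU) hsdot_tensorT_tensorT.
rewrite hsdot_unitary ?unitary_mul // [hsdot U _]hsdotC hsdot_tensorT.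
rewrite (hsdot_polar HX HP HG) Hsum -natrM mulnC card_split.
by ring.
Qed.

End MainArgument.

Theorem mainTheorem4 (C : numClosedFieldType) (n : nat) (hn : (0 < n)%N)
  (U : 'M[C]_(2 ^ n)) (T : {set 'I_n}) (delta : C) :
  unitary U ->
  1 - delta <= \sum_(x : {ffun 'I_n -> 'I_4} | in_Z4T T x) `|mu x U| ^+ 2 ->
  exists Vt : 'M[C]_(2 ^ #|T|),
    unitary Vt /\ D_le U (tensorT T Vt) (2 * sqrtC delta).
Proof.
move=> HU Hweight; rewrite -/(pauli_weight T U) in Hweight.
have [X [P [sg [HX HP sg_ge0 HG]]]] := svd (ptrace T U).
exists (X *m P); split; first exact: unitary_mul.
apply: D_le_of_dist; rewrite (dist_polar HU HX HP sg_ge0 HG).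
apply: (@le_trans _ _ (2 * (2 ^ n)%:R * (1 - pauli_weight T U))).
  rewrite mulrBr mulr1 lerD2l lerN2 -mulrA ler_pM2l //.
  exact: (pauli_weight_le HU HX HP sg_ge0 HG).
apply: ler_wpM2l; first by rewrite mulr_ge0 ?ler0n.
by rewrite lerBlDr addrC -lerBlDr.
Qed.
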